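(* Let \[ Q(\tau)=\frac1{R_gT_\infty}\Big(\frac{4\pi}3-\frac{8(\gamma-1)}{\pi\gamma}\sum_{j\ge1}\frac{\tau}{j^2(\pi^2\bar\kappa j^2+\tau)}\Big)\Big(\rho_lR_*\tau^2+\frac{4\mu_l}{R_*}\tau-\frac{2\sigma}{R_*^2}\Big)+4\pi\frac{\rho_*}{R_*}, \] a meromorphic function of $\tau\in\mathbb C$. There exists $\phi\in(\pi/2,\pi)$ such that all roots of $Q$ lie in the sector $S_\phi=\{\tau\in\mathbb C:\phi\le|\arg\tau|\le\pi\}$.
   Context: Parameters: $\kappa>0$, $\gamma>1$, $c_v>0$, $R_g>0$ with $c_p=\gamma c_v=c_v+R_g$; $T_\infty>0$, $p_{\infty,*}>0$, $\sigma>0$, $\mu_l\ge0$, $\rho_l>0$; $\rho_*,R_*>0$ with $R_gT_\infty\rho_*=p_{\infty,*}+2\sigma/R_*$; $\bar\kappa=\kappa/(c_p\rho_*R_*^2)$. *)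

From Stdlib Require Export Reals.
From Coquelicot Require Export Coquelicot.

Definition Csum (a : nat -> C) : C :=
  (Series (fun n => Re (a n)), Series (fun n => Im (a n))).

(* Principal argument of z, in (-PI, PI] for z <> 0. *)
Definition Carg (z : C) : R :=
  if Rle_dec 0 (Im z) then acos (Re z / Cmod z) else - acos (Re z / Cmod z).

Definition kbar (kappa cp rhos Rs : R) : R := kappa / (cp * rhos * Rs ^ 2).

Definition Qterm (kb : R) (tau : C) (j : nat) : C :=
  Cdiv tau (Cmult (RtoC (INR j ^ 2))
                  (Cplus (RtoC (PI ^ 2 * kb * INR j ^ 2)) tau)).

(* Q(tau); the series is over j >= 1 *)
Definition Qfun (kb gamma Rg Tinf sigma mul rhol rhos Rs : R) (tau : C) : C :=
  Cplus
    (Cmult (Cmult (RtoC (1 / (Rg * Tinf)))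
                  (Cminus (RtoC (4 * PI / 3))
                          (Cmult (RtoC (8 * (gamma - 1) / (PI * gamma)))
                                 (Csum (fun n => Qterm kb tau (S n))))))
           (Cminus (Cplus (Cmult (RtoC (rhol * Rs)) (Cmult tau tau))
                          (Cmult (RtoC (4 * mul / Rs)) tau))
                   (RtoC (2 * sigma / Rs ^ 2))))
    (RtoC (4 * PI * rhos / Rs)).

Definition is_pole (kb : R) (tau : C) : Prop :=
  exists j : nat, (1 <= j)%nat /\ tau = RtoC (- (PI ^ 2 * kb * INR j ^ 2)).

Definition is_root_Q (kb gamma Rg Tinf sigma mul rhol rhos Rs : R) (tau : C) : Prop :=
  ~ is_pole kb tau /\ Qfun kb gamma Rg Tinf sigma mul rhol rhos Rs tau = RtoC 0.

(* Write tau = x + i y, B(tau) for the quadratic factor of Q and a = PI^2 kbar.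
   On the real half-line x >= 0 the series is real with sum in [0, PI^2/6], so
   Q(x) >= 4 PI rho_*/R_* - (4 PI/3) (2 sigma/R_*^2)/(R_g T_inf) > 0; the bound
   sum 1/j^2 <= PI^2/6 is sharp enough because (gamma - 1)/gamma < 1, and it is
   obtained from the partial-fraction expansion of 1/sin^2 by repeated duplication.
   Off the real axis the imaginary part of the series is a y W with
   W = sum_j 1/|a j^2 + tau|^2 >= 1/|a + tau|^2, and comparing real and imaginary
   parts of the root equation gives  K Re B'(tau) = - c a W |B(tau)|^2  with
   K, c > 0.  Hence Re B'(tau) <= 0, so x <= 0.  If moreover x^2 <= eps y^2, then
   Re B(tau) <= -(2 sigma/R_*^2 + rho_l R_* y^2/2), so the right-hand side is at
   least of order 1 + y^2, while the left-hand side is at most of order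
   sqrt eps |y|.  Hence for a fixed small eps every root satisfies x < 0 and
   eps y^2 <= x^2: it lies in a sector around the negative real axis. *)

From Stdlib Require Import Lra Lia Psatz.
Open Scope R_scope.

(** * The bound sum 1/n^2 <= PI^2/6 *)

Fixpoint psum (F : nat -> R) (n : nat) : R :=
  match n with O => 0 | S n => psum F n + F n end.

Lemma psum_ext F G n : (forall k, (k < n)%nat -> F k = G k) -> psum F n = psum G n.
Proof.
  induction n as [|n IH]; intros H; simpl; [reflexivity|].
  rewrite IH, H by (intros; try apply H; lia). reflexivity.
Qed.

Lemma psum_monotone F n m : (forall k, 0 <= F k) -> (n <= m)%nat -> psum F n <= psum F m.
Proof.
  intros HF Hnm; induction Hnm as [|m _ IH]; simpl; [lra|].
  specialize (HF m); lra.
Qed.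

Lemma psum_plus F G n : psum (fun k => F k + G k) n = psum F n + psum G n.
Proof. induction n as [|n IH]; simpl; [lra|]. rewrite IH; ring. Qed.

Lemma psum_scal c F n : psum (fun k => c * F k) n = c * psum F n.
Proof. induction n as [|n IH]; simpl; [lra|]. rewrite IH; ring. Qed.

Lemma psum_even_odd F n :
  psum F (2 * n) = psum (fun k => F (2 * k)%nat + F (S (2 * k))) n.
Proof.
  induction n as [|n IH]; [reflexivity|].
  replace (2 * S n)%nat with (S (S (2 * n))) by lia.
  change (psum F (2 * n) + F (2 * n)%nat + F (S (2 * n))
          = psum (fun k => F (2 * k)%nat + F (S (2 * k))) n + (F (2 * n)%nat + F (S (2 * n)))).
  rewrite IH; ring.
Qed.

Lemma sum_n_psum a N : sum_n a N = psum a (S N).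
Proof.
  induction N as [|N IH].
  - rewrite sum_O; simpl; lra.
  - rewrite sum_Sn, IH; reflexivity.
Qed.

Lemma inv_sin2_duplication x : 0 < x < PI ->
  1 / sin x ^ 2 = (1 / sin (x / 2) ^ 2 + 1 / sin ((PI - x) / 2) ^ 2) / 4.
Proof.
  intros Hx.
  assert (Hs : 0 < sin (x / 2)) by (apply sin_gt_0; lra).
  assert (Hc : 0 < cos (x / 2)) by (apply cos_gt_0; lra).
  replace ((PI - x) / 2) with (PI / 2 - x / 2) by field. rewrite sin_shift.
  replace x with (2 * (x / 2)) at 1 by field. rewrite sin_2a.
  pose proof (sin2_cos2 (x / 2)) as E; unfold Rsqr in E.
  field_simplify; [|lra|lra]. rewrite <- E at 1. field; lra.
Qed.

Lemma inv_sq_le_inv_sin2 x : 0 < x < PI -> 1 / x ^ 2 <= 1 / sin x ^ 2.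
Proof.
  intros Hx. pose proof (sin_lt_x x ltac:(lra)). pose proof (sin_gt_0 x ltac:(lra) ltac:(lra)).
  apply Rmult_le_compat_l; [lra|]. apply Rinv_le_contravar; nra.
Qed.

(* 1 / sin x ^ 2 is the sum of 1 / (x + k PI) ^ 2 over all integers k;
   [pf_pos] and [pf_neg] are the terms with k >= 0 and k < 0. *)
Definition pf_pos x k := 1 / (x + INR k * PI) ^ 2.
Definition pf_neg x k := 1 / (INR (S k) * PI - x) ^ 2.

Lemma psum_pf_le_inv_sin2 n x : 0 < x < PI ->
  psum (pf_pos x) (2 ^ n) + psum (pf_neg x) (2 ^ n) <= 1 / sin x ^ 2.
Proof.
  pose proof PI_RGT_0.
  revert x; induction n as [|n IH]; intros x Hx; rewrite inv_sin2_duplication by lra.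
  - pose proof (inv_sq_le_inv_sin2 (x / 2) ltac:(lra)).
    pose proof (inv_sq_le_inv_sin2 ((PI - x) / 2) ltac:(lra)).
    cbn [Nat.pow Nat.mul Nat.add psum]. unfold pf_pos, pf_neg; rewrite INR_0, INR_1.
    replace (1 / (x + 0 * PI) ^ 2) with (1 / (x / 2) ^ 2 / 4) by (field; lra).
    replace (1 / (1 * PI - x) ^ 2) with (1 / ((PI - x) / 2) ^ 2 / 4) by (field; lra).
    lra.
  - pose proof (IH (x / 2) ltac:(lra)). pose proof (IH ((PI - x) / 2) ltac:(lra)).
    replace (2 ^ S n)%nat with (2 * 2 ^ n)%nat by (simpl; lia).
    rewrite !psum_even_odd.
    assert (Epos : psum (fun k => pf_pos x (2 * k) + pf_pos x (S (2 * k))) (2 ^ n)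
      = (psum (pf_pos (x / 2)) (2 ^ n) + psum (pf_neg ((PI - x) / 2)) (2 ^ n)) / 4).
    { unfold Rdiv at 1. rewrite Rmult_comm, <- psum_plus, <- psum_scal.
      apply psum_ext; intros k _. unfold pf_pos, pf_neg.
      rewrite !S_INR, !mult_INR; simpl. pose proof (pos_INR k). field; split; nra. }
    assert (Eneg : psum (fun k => pf_neg x (2 * k) + pf_neg x (S (2 * k))) (2 ^ n)
      = (psum (pf_neg (x / 2)) (2 ^ n) + psum (pf_pos ((PI - x) / 2)) (2 ^ n)) / 4).
    { unfold Rdiv at 1. rewrite Rmult_comm, <- psum_plus, <- psum_scal.
      apply psum_ext; intros k _. unfold pf_pos, pf_neg.
      rewrite !S_INR, !mult_INR; simpl. pose proof (pos_INR k). field; split; nra. }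
    rewrite Epos, Eneg. lra.
Qed.

Definition odd_inv_sq k := 1 / (2 * INR k + 1) ^ 2.

Lemma odd_inv_sq_pos k : 0 < odd_inv_sq k.
Proof. unfold odd_inv_sq. pose proof (pos_INR k). apply Rdiv_lt_0_compat; nra. Qed.

Lemma psum_odd_inv_sq_le N : psum odd_inv_sq N <= PI ^ 2 / 8.
Proof.
  pose proof PI_RGT_0 as HPI.
  apply Rle_trans with (psum odd_inv_sq (2 ^ N)).
  { apply psum_monotone; [intros k; apply Rlt_le, odd_inv_sq_pos|].
    apply Nat.lt_le_incl, Nat.pow_gt_lin_r; lia. }
  pose proof (psum_pf_le_inv_sin2 N (PI / 2) ltac:(lra)) as H.
  rewrite sin_PI2 in H.
  assert (Epf : forall k, pf_pos (PI / 2) k = 4 / PI ^ 2 * odd_inv_sq k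
                       /\ pf_neg (PI / 2) k = 4 / PI ^ 2 * odd_inv_sq k).
  { intros k. unfold pf_pos, pf_neg, odd_inv_sq. rewrite S_INR. pose proof (pos_INR k).
    split; field; split; nra. }
  rewrite (psum_ext _ _ _ (fun k _ => proj1 (Epf k))),
          (psum_ext _ _ _ (fun k _ => proj2 (Epf k))), psum_scal in H.
  assert (0 < PI ^ 2) by nra.
  apply Rmult_le_reg_l with (8 / PI ^ 2); [apply Rdiv_lt_0_compat; lra|].
  replace (8 / PI ^ 2 * (PI ^ 2 / 8)) with 1 by (field; lra). lra.
Qed.

Definition zeta2_term n := 1 / INR (S n) ^ 2.

Lemma zeta2_term_pos n : 0 < zeta2_term n.
Proof. unfold zeta2_term. apply Rdiv_lt_0_compat; [lra|]. apply pow_lt, lt_0_INR; lia. Qed.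

Lemma psum_zeta2_le N : psum zeta2_term N <= PI ^ 2 / 6.
Proof.
  assert (Hnn : forall k, 0 <= zeta2_term k) by (intros; apply Rlt_le, zeta2_term_pos).
  (* the even terms sum to a quarter of the whole *)
  assert (E : psum zeta2_term (2 * N) = psum odd_inv_sq N + psum zeta2_term N / 4).
  { rewrite psum_even_odd. unfold Rdiv at 1. rewrite Rmult_comm, <- psum_scal, <- psum_plus.
    apply psum_ext; intros k _. unfold zeta2_term, odd_inv_sq.
    rewrite !S_INR, !mult_INR; simpl. pose proof (pos_INR k). field; split; nra. }
  pose proof (psum_odd_inv_sq_le N). pose proof (psum_monotone zeta2_term N (2 * N) Hnn ltac:(lia)).
  lra.
Qed.

Lemma ex_series_zeta2 : ex_series zeta2_term.
Proof.
  destruct (ex_finite_lim_seq_incr (sum_n zeta2_term) (PI ^ 2 / 6)) as [l Hl].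
  - intros n. rewrite !sum_n_psum. simpl. pose proof (zeta2_term_pos (S n)). simpl in *. lra.
  - intros n. rewrite sum_n_psum. apply psum_zeta2_le.
  - exists l; exact Hl.
Qed.

Lemma Series_zeta2_le : Series zeta2_term <= PI ^ 2 / 6.
Proof.
  change (Rbar_le (Series zeta2_term) (PI ^ 2 / 6)).
  apply (is_lim_seq_le (sum_n zeta2_term) (fun _ => PI ^ 2 / 6)).
  - intros n. rewrite sum_n_psum. apply psum_zeta2_le.
  - apply Series_correct, ex_series_zeta2.
  - apply is_lim_seq_const.
Qed.

(** * Arguments in a sector *)

Lemma acos_decreasing u v : -1 <= u -> u < v -> v <= 1 -> acos v < acos u.
Proof.
  intros Hu Huv Hv. pose proof (acos_bound u). pose proof (acos_bound v).
  apply cos_decreasing_0; try lra. rewrite !cos_acos by lra. exact Huv.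
Qed.

Lemma Rabs_Carg z : Rabs (Carg z) = acos (Re z / Cmod z).
Proof.
  unfold Carg. pose proof (acos_bound (Re z / Cmod z)).
  destruct (Rle_dec 0 (Im z)); [|rewrite Rabs_Ropp]; apply Rabs_pos_eq; lra.
Qed.

Lemma sector_of_cone eps : 0 < eps ->
  exists phi, PI / 2 < phi < PI /\
    forall x y, x < 0 -> eps * y ^ 2 <= x ^ 2 -> phi <= Rabs (Carg (x, y)) <= PI.
Proof.
  intros Heps. set (s := Rmin (1 / 2) eps).
  assert (Hs : 0 < s <= 1 / 2) by (split; [apply Rmin_glb_lt; lra | apply Rmin_l]).
  assert (Hse : s <= eps) by apply Rmin_r.
  exists (acos (- s)). split.
  { rewrite acos_opp.
    pose proof (acos_decreasing 0 s ltac:(lra) ltac:(lra) ltac:(lra)).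
    pose proof (acos_decreasing s 1 ltac:(lra) ltac:(lra) ltac:(lra)).
    rewrite acos_0 in *; rewrite acos_1 in *. lra. }
  intros x y Hx Hcone. rewrite Rabs_Carg. change (Re (x, y)) with x.
  set (t := Cmod (x, y)).
  assert (Ht2 : t ^ 2 = x ^ 2 + y ^ 2) by (apply pow2_sqrt; nra).
  assert (Ht : 0 < t) by (pose proof (Cmod_ge_0 (x, y)) as H; fold t in H; nra).
  assert (Hst : s * t <= - x).
  { assert (Hs2 : s ^ 2 <= eps / 2) by nra.
    assert (s ^ 2 * y ^ 2 <= x ^ 2 / 2) by (assert (0 <= y ^ 2) by nra; nra).
    assert (s ^ 2 * x ^ 2 <= x ^ 2 / 2).
    { assert (s ^ 2 <= 1 / 2) by nra. assert (0 <= x ^ 2) by nra. nra. }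
    assert ((s * t) ^ 2 <= (- x) ^ 2)
      by (replace ((s * t) ^ 2) with (s ^ 2 * t ^ 2) by ring; rewrite Ht2; nra).
    apply Rsqr_incr_0_var; unfold Rsqr; nra. }
  assert (Hxt : -1 <= x / t <= - s).
  { split; apply Rmult_le_reg_r with t; try lra; unfold Rdiv; rewrite Rmult_assoc, Rinv_l; nra. }
  pose proof (acos_bound (x / t)).
  split; [|lra].
  destruct (Rle_lt_or_eq_dec _ _ (proj2 Hxt)) as [Hlt|Heq]; [|rewrite Heq; lra].
  apply Rlt_le, acos_decreasing; lra.
Qed.

(** * Real and imaginary parts of Q *)

Lemma Qterm_re_im kb x y n (d := PI ^ 2 * kb * INR (S n) ^ 2 + x) :
  0 < d ^ 2 + y ^ 2 ->
  Re (Qterm kb (x, y) (S n)) = (x * d + y ^ 2) / (INR (S n) ^ 2 * (d ^ 2 + y ^ 2)) /\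
  Im (Qterm kb (x, y) (S n)) = PI ^ 2 * kb * y / (d ^ 2 + y ^ 2).
Proof.
  intros Hd. assert (HJ : 0 < INR (S n)) by (apply lt_0_INR; lia).
  unfold Qterm, Cdiv, Cmult, Cinv, Cplus, RtoC, Re, Im; cbn [fst snd].
  fold d. set (J := INR (S n)) in *.
  replace ((J ^ 2 * d - 0 * (0 + y)) ^ 2 + (J ^ 2 * (0 + y) + 0 * d) ^ 2)
    with (J ^ 4 * (d ^ 2 + y ^ 2)) by ring.
  split; [|replace (PI ^ 2 * kb * y) with ((d - x) / J ^ 2 * y) by (unfold d; field; lra)];
    field; split; lra.
Qed.

Lemma Qfun_re_im kb gamma Rg Tinf sigma mul rhol rhos Rs x y
  (SR := Series (fun n => Re (Qterm kb (x, y) (S n))))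
  (SI := Series (fun n => Im (Qterm kb (x, y) (S n))))
  (c := 8 * (gamma - 1) / (PI * gamma))
  (Br := rhol * Rs * (x ^ 2 - y ^ 2) + 4 * mul / Rs * x - 2 * sigma / Rs ^ 2)
  (L := 2 * (rhol * Rs) * x + 4 * mul / Rs) :
  Re (Qfun kb gamma Rg Tinf sigma mul rhol rhos Rs (x, y))
    = 1 / (Rg * Tinf) * ((4 * PI / 3 - c * SR) * Br + c * SI * (y * L)) + 4 * PI * rhos / Rs /\
  Im (Qfun kb gamma Rg Tinf sigma mul rhol rhos Rs (x, y))
    = 1 / (Rg * Tinf) * ((4 * PI / 3 - c * SR) * (y * L) - c * SI * Br).
Proof.
  unfold Qfun. change (Csum (fun n => Qterm kb (x, y) (S n))) with (SR, SI).
  unfold c, Br, L, Cminus, Cplus, Cmult, Copp, RtoC, Re, Im; cbn [fst snd].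
  split; ring.
Qed.

Lemma ex_series_nonneg_le (a b : nat -> R) :
  (forall n, 0 <= a n <= b n) -> ex_series b -> ex_series a.
Proof.
  intros Hab Hb. apply (ex_series_le a b); [|exact Hb].
  intros n. change (Rabs (a n) <= b n). rewrite Rabs_pos_eq; apply Hab.
Qed.

Lemma Series_ge_first (a : nat -> R) : (forall n, 0 <= a n) -> ex_series a -> a O <= Series a.
Proof.
  intros Ha Hex. change (Rbar_le (a O) (Series a)).
  apply (is_lim_seq_le (fun _ => a O) (sum_n a)).
  - intros N. rewrite sum_n_psum.
    apply Rle_trans with (psum a 1); [simpl; lra | apply psum_monotone; [exact Ha | lia]].
  - apply is_lim_seq_const.
  - apply Series_correct, Hex.
Qed.

Lemma Series_Qterm_real_bounds kb x : 0 < kb -> 0 <= x ->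
  0 <= Series (fun n => Re (Qterm kb (x, 0) (S n))) <= PI ^ 2 / 6.
Proof.
  intros Hkb Hx. pose proof PI_RGT_0.
  assert (Hterm : forall n, 0 <= Re (Qterm kb (x, 0) (S n)) <= zeta2_term n).
  { intros n. unfold zeta2_term.
    assert (HJ : 0 < INR (S n)) by (apply lt_0_INR; lia).
    assert (Ha : 0 < PI ^ 2 * kb * INR (S n) ^ 2)
      by (apply Rmult_lt_0_compat; [apply Rmult_lt_0_compat; [apply pow_lt|] | apply pow_lt]; lra).
    destruct (Qterm_re_im kb x 0 n ltac:(nra)) as [-> _].
    revert HJ Ha. generalize (PI ^ 2 * kb * INR (S n) ^ 2) as a; generalize (INR (S n)) as J.
    intros J a HJ Ha.
    replace ((x * (a + x) + 0 ^ 2) / (J ^ 2 * ((a + x) ^ 2 + 0 ^ 2)))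
      with (x / (a + x) * (1 / J ^ 2)) by (field; lra).
    assert (0 < 1 / J ^ 2) by (apply Rdiv_lt_0_compat; [|apply pow_lt]; lra).
    assert (0 <= x / (a + x) <= 1).
    { split; [apply Rdiv_le_0_compat | apply (proj1 (Rdiv_le_1 x (a + x) ltac:(lra)))]; lra. }
    split; [apply Rmult_le_pos|]; nra. }
  split.
  - apply Rle_trans with (Re (Qterm kb (x, 0) 1)); [apply Hterm|].
    apply (Series_ge_first (fun n => Re (Qterm kb (x, 0) (S n)))); [apply Hterm|].
    apply (ex_series_nonneg_le _ zeta2_term Hterm ex_series_zeta2).
  - apply Rle_trans with (Series zeta2_term); [|apply Series_zeta2_le].
    apply Series_le; [exact Hterm | exact ex_series_zeta2].
Qed.

Lemma sqdist_ge_linear a x y t : 1 <= t ->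
  a ^ 2 * y ^ 2 * t <= 2 * (x ^ 2 + y ^ 2) * ((a * t + x) ^ 2 + y ^ 2).
Proof.
  intros Ht.
  assert (H1 : (a * t) ^ 2 <= 2 * (a * t + x) ^ 2 + 2 * x ^ 2).
  { pose proof (pow2_ge_0 (a * t + 2 * x)). nra. }
  assert (H2 : a ^ 2 * t <= (a * t) ^ 2).
  { replace ((a * t) ^ 2) with (a ^ 2 * t * t) by ring. pose proof (pow2_ge_0 a).
    assert (0 <= a ^ 2 * t) by nra. nra. }
  pose proof (pow2_ge_0 x). pose proof (pow2_ge_0 y). pose proof (pow2_ge_0 (a * t + x)).
  assert (y ^ 2 * (a ^ 2 * t) <= y ^ 2 * (2 * (a * t + x) ^ 2 + 2 * x ^ 2))
    by (apply Rmult_le_compat_l; lra).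
  nra.
Qed.

Lemma Series_inv_sqdist_ge_first a x y : 0 < a -> y <> 0 ->
  1 / ((a + x) ^ 2 + y ^ 2) <= Series (fun n => 1 / ((a * INR (S n) ^ 2 + x) ^ 2 + y ^ 2)).
Proof.
  intros Ha Hy. assert (Hy2 : 0 < y ^ 2) by (apply pow2_gt_0; exact Hy).
  assert (Hterm : forall n, 0 <= 1 / ((a * INR (S n) ^ 2 + x) ^ 2 + y ^ 2)
                             <= 2 * (x ^ 2 + y ^ 2) / (a ^ 2 * y ^ 2) * zeta2_term n).
  { intros n. unfold zeta2_term.
    assert (HJ : 1 <= INR (S n)) by (rewrite S_INR; pose proof (pos_INR n); lra).
    revert HJ. generalize (INR (S n)) as J. intros J HJ.
    pose proof (sqdist_ge_linear a x y (J ^ 2) ltac:(nra)) as Hlin.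
    assert (HD : 0 < (a * J ^ 2 + x) ^ 2 + y ^ 2) by (pose proof (pow2_ge_0 (a * J ^ 2 + x)); lra).
    assert (HaJ : 0 < a ^ 2 * y ^ 2 * J ^ 2).
    { apply Rmult_lt_0_compat; [apply Rmult_lt_0_compat; [apply pow_lt | exact Hy2] | apply pow_lt];
        lra. }
    split; [apply Rlt_le, Rdiv_lt_0_compat; lra|].
    apply Rle_div_l; [exact HD|].
    replace (2 * (x ^ 2 + y ^ 2) / (a ^ 2 * y ^ 2) * (1 / J ^ 2) * ((a * J ^ 2 + x) ^ 2 + y ^ 2))
      with (2 * (x ^ 2 + y ^ 2) * ((a * J ^ 2 + x) ^ 2 + y ^ 2) / (a ^ 2 * y ^ 2 * J ^ 2))
      by (field; repeat split; nra).
    apply Rle_div_r; [exact HaJ|]. lra. }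
  replace (a + x) with (a * INR 1 ^ 2 + x) by (rewrite INR_1; ring).
  apply (Series_ge_first (fun n => 1 / ((a * INR (S n) ^ 2 + x) ^ 2 + y ^ 2))).
  - intros n; apply Hterm.
  - apply (ex_series_nonneg_le _ _ Hterm).
    exact (ex_series_scal_l (2 * (x ^ 2 + y ^ 2) / (a ^ 2 * y ^ 2)) _ ex_series_zeta2).
Qed.

(** * Location of the roots *)

Lemma Cmult_eq_real_im P I u v K :
  P * u - I * v = - K -> P * v + I * u = 0 -> I * (u ^ 2 + v ^ 2) = K * v.
Proof.
  intros Hre Him.
  replace (I * (u ^ 2 + v ^ 2)) with (u * (P * v + I * u) - v * (P * u - I * v)) by ring.
  rewrite Hre, Him; ring.
Qed.

(* By AM-GM (q + b u)^2 >= 4 q b u, and q + b u >= mu (alpha + u): the right-hand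
   side grows like sqrt u (alpha + u), with a constant that beats C sqrt delta. *)
Lemma sqrt_growth_dominated A q b alpha C :
  0 < A -> 0 < q -> 0 < b -> 0 <= alpha -> 0 < C ->
  exists delta, 0 < delta /\
    forall u X, 0 < u -> 0 <= X -> X ^ 2 <= delta * u -> C * X * (alpha + u) < A * (q + b * u) ^ 2.
Proof.
  intros HA Hq Hb Halpha HC.
  set (mu := Rmin b (q / (alpha + 1))).
  assert (Hmu : 0 < mu) by (apply Rmin_glb_lt; [lra | apply Rdiv_lt_0_compat; lra]).
  assert (Hmu_alpha : mu * alpha <= q).
  { apply Rle_trans with (q / (alpha + 1) * alpha); [apply Rmult_le_compat_r, Rmin_r; lra|].
    apply Rmult_le_reg_r with (alpha + 1); [lra|].
    unfold Rdiv; replace (q * / (alpha + 1) * alpha * (alpha + 1)) with (q * alpha)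
      by (field; lra). nra. }
  assert (Hmu_b : mu <= b) by apply Rmin_l.
  clearbody mu.
  exists (2 * A ^ 2 * q * b * mu ^ 2 / C ^ 2). split.
  { apply Rdiv_lt_0_compat; [|nra]. repeat apply Rmult_lt_0_compat; nra. }
  intros u X Hu HX HXu.
  assert (Hlin : mu * (alpha + u) <= q + b * u).
  { assert (mu * u <= b * u) by (apply Rmult_le_compat_r; lra).
    rewrite Rmult_plus_distr_l; lra. }
  assert (Hamgm : 4 * q * b * u <= (q + b * u) ^ 2).
  { pose proof (pow2_ge_0 (q - b * u)).
    replace ((q + b * u) ^ 2) with ((q - b * u) ^ 2 + 4 * q * b * u) by ring. lra. }
  assert (Hquart : 4 * q * b * mu ^ 2 * u * (alpha + u) ^ 2 <= (q + b * u) ^ 4).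
  { replace ((q + b * u) ^ 4) with ((q + b * u) ^ 2 * (q + b * u) ^ 2) by ring.
    replace (4 * q * b * mu ^ 2 * u * (alpha + u) ^ 2)
      with ((4 * q * b * u) * (mu * (alpha + u)) ^ 2) by ring.
    apply Rmult_le_compat;
      [repeat apply Rmult_le_pos; lra | apply pow2_ge_0 | exact Hamgm | apply pow_incr; nra]. }
  assert (HX2 : C ^ 2 * X ^ 2 <= 2 * A ^ 2 * q * b * mu ^ 2 * u).
  { apply Rmult_le_compat_l with (r := C ^ 2) in HXu; [|nra].
    replace (C ^ 2 * (2 * A ^ 2 * q * b * mu ^ 2 / C ^ 2 * u))
      with (2 * A ^ 2 * q * b * mu ^ 2 * u) in HXu by (field; lra).
    exact HXu. }
  assert (Hbu : 0 < b * u) by (apply Rmult_lt_0_compat; lra).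
  assert (HQ : 0 < A * (q + b * u) ^ 2) by (apply Rmult_lt_0_compat; [|apply pow_lt]; lra).
  assert (HQ2 : 4 * A ^ 2 * q * b * mu ^ 2 * u * (alpha + u) ^ 2 <= (A * (q + b * u) ^ 2) ^ 2).
  { replace ((A * (q + b * u) ^ 2) ^ 2) with (A ^ 2 * (q + b * u) ^ 4) by ring.
    replace (4 * A ^ 2 * q * b * mu ^ 2 * u * (alpha + u) ^ 2)
      with (A ^ 2 * (4 * q * b * mu ^ 2 * u * (alpha + u) ^ 2)) by ring.
    apply Rmult_le_compat_l; nra. }
  assert (HL2 : (C * X * (alpha + u)) ^ 2 <= 2 * A ^ 2 * q * b * mu ^ 2 * u * (alpha + u) ^ 2).
  { replace ((C * X * (alpha + u)) ^ 2) with ((C ^ 2 * X ^ 2) * (alpha + u) ^ 2) by ring.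
    apply Rmult_le_compat_r; nra. }
  assert (0 < 2 * A ^ 2 * q * b * mu ^ 2 * u * (alpha + u) ^ 2).
  { repeat apply Rmult_lt_0_compat; nra. }
  destruct (Rlt_or_le (C * X * (alpha + u)) (A * (q + b * u) ^ 2)) as [Hlt|Hge]; [exact Hlt|].
  assert ((A * (q + b * u) ^ 2) ^ 2 <= (C * X * (alpha + u)) ^ 2) by (apply pow_incr; lra).
  lra.
Qed.

(* For B(tau) = rr tau^2 + m tau - q we have B(x + i y) = Br + i y L; the balance
   hypothesis is the imaginary part of the root equation of Q divided by y, with
   W = sum_j 1 / |a j^2 + tau|^2 and K, A the positive constants of Q. *)
Lemma cone_of_balance a A K rr m q :
  0 < a -> 0 < A -> 0 < K -> 0 < rr -> 0 <= m -> 0 < q ->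
  exists eps, 0 < eps /\
    forall x y W, y <> 0 -> 1 / ((a + x) ^ 2 + y ^ 2) <= W ->
      let Br := rr * (x ^ 2 - y ^ 2) + m * x - q in
      let L := 2 * rr * x + m in
      K * L = - (A * W * (Br ^ 2 + (y * L) ^ 2)) ->
      x < 0 /\ eps * y ^ 2 <= x ^ 2.
Proof.
  intros Ha HA HK Hrr Hm Hq.
  destruct (sqrt_growth_dominated A q (7 / 8 * rr) (a ^ 2) (4 * rr * K))
    as [delta [Hdelta Hgrowth]]; try nra.
  exists (Rmin delta (1 / 8)). split; [apply Rmin_glb_lt; lra|].
  intros x y W Hy HW Br L Hbal.
  assert (Hy2 : 0 < y ^ 2) by (apply pow2_gt_0; exact Hy).
  set (D0 := (a + x) ^ 2 + y ^ 2) in HW.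
  assert (HD0 : 0 < D0) by (unfold D0; pose proof (pow2_ge_0 (a + x)); lra).
  assert (HW0 : 0 < W) by (apply Rlt_le_trans with (1 / D0); [apply Rdiv_lt_0_compat|]; lra).
  assert (HB2 : 0 <= Br ^ 2 + (y * L) ^ 2)
    by (pose proof (pow2_ge_0 Br); pose proof (pow2_ge_0 (y * L)); lra).
  assert (HL : L <= 0).
  { assert (0 <= A * W * (Br ^ 2 + (y * L) ^ 2)) by (repeat apply Rmult_le_pos; lra). nra. }
  assert (Hx : x <= 0) by (unfold L in HL; nra).
  enough (Hcone : Rmin delta (1 / 8) * y ^ 2 <= x ^ 2).
  { split; [|exact Hcone].
    assert (0 < Rmin delta (1 / 8)) by (apply Rmin_glb_lt; lra).
    destruct (Req_dec x 0) as [->|]; [nra|lra]. }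
  destruct (Rle_or_lt (Rmin delta (1 / 8) * y ^ 2) (x ^ 2)) as [|Hsmall]; [assumption|exfalso].
  assert (Hxd : x ^ 2 <= delta * y ^ 2).
  { pose proof (Rmin_l delta (1 / 8)). nra. }
  assert (Hx8 : x ^ 2 <= y ^ 2 / 8).
  { pose proof (Rmin_r delta (1 / 8)). nra. }
  assert (HBr : q + 7 / 8 * rr * y ^ 2 <= - Br).
  { unfold Br. assert (0 <= m * - x) by (apply Rmult_le_pos; lra). nra. }
  assert (HBr2 : (q + 7 / 8 * rr * y ^ 2) ^ 2 <= Br ^ 2).
  { replace (Br ^ 2) with ((- Br) ^ 2) by ring. apply pow_incr. split; [|exact HBr].
    assert (0 <= rr * y ^ 2) by (apply Rmult_le_pos; lra). lra. }
  assert (HD0b : D0 <= 2 * (a ^ 2 + y ^ 2)).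
  { unfold D0. pose proof (pow2_ge_0 (a - x)). nra. }
  assert (HnL : - L <= 2 * rr * - x) by (unfold L; lra).
  assert (HABr : A * Br ^ 2 <= D0 * (K * - L)).
  { replace (K * - L) with (A * W * (Br ^ 2 + (y * L) ^ 2)) by lra.
    assert (A * Br ^ 2 * (1 / D0) <= A * W * (Br ^ 2 + (y * L) ^ 2)).
    { assert (0 <= A * W * (y * L) ^ 2)
        by (apply Rmult_le_pos; [apply Rmult_le_pos|apply pow2_ge_0]; lra).
      apply Rle_trans with (A * Br ^ 2 * W); [|rewrite Rmult_plus_distr_l; lra].
      apply Rmult_le_compat_l; [apply Rmult_le_pos; [lra|apply pow2_ge_0] | lra]. }
    replace (A * Br ^ 2) with (D0 * (A * Br ^ 2 * (1 / D0))) by (field; lra).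
    apply Rmult_le_compat_l; lra. }
  pose proof (Hgrowth (y ^ 2) (- x) Hy2 ltac:(lra) ltac:(nra)) as Hlt.
  assert (A * (q + 7 / 8 * rr * y ^ 2) ^ 2 <= 4 * rr * K * - x * (a ^ 2 + y ^ 2)).
  { apply Rle_trans with (A * Br ^ 2); [apply Rmult_le_compat_l; lra|].
    apply Rle_trans with (D0 * (K * - L)); [exact HABr|].
    apply Rle_trans with (2 * (a ^ 2 + y ^ 2) * (K * (2 * rr * - x))); [|nra].
    apply Rmult_le_compat; nra. }
  lra.
Qed.

Section QfunRoots.

Variables kb gamma Rg Tinf sigma mul rhol rhos Rs : R.
Hypotheses (Hkb : 0 < kb) (Hgamma : 1 < gamma) (HRg : 0 < Rg) (HTinf : 0 < Tinf)
  (Hsigma : 0 < sigma) (Hmul : 0 <= mul) (Hrhol : 0 < rhol) (Hrhos : 0 < rhos) (HRs : 0 < Rs).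
(* Equivalent to Q 0 > 0. *)
Hypothesis Hsurf : 2 * sigma / Rs < 3 * (Rg * Tinf * rhos).

Local Notation Q := (Qfun kb gamma Rg Tinf sigma mul rhol rhos Rs).

Lemma Qfun_real_pos x : 0 <= x -> 0 < Re (Q (x, 0)).
Proof.
  intros Hx. pose proof PI_RGT_0.
  destruct (Qfun_re_im kb gamma Rg Tinf sigma mul rhol rhos Rs x 0) as [-> _].
  pose proof (Series_Qterm_real_bounds kb x Hkb Hx) as HSR.
  rewrite Rmult_0_l, Rmult_0_r, Rplus_0_r.
  remember (Series (fun n => Re (Qterm kb (x, 0) (S n)))) as SR eqn:E; clear E.
  assert (Hc : 0 <= 8 * (gamma - 1) / (PI * gamma)) by (apply Rdiv_le_0_compat; nra).
  assert (HcP : 8 * (gamma - 1) / (PI * gamma) * (PI ^ 2 / 6) <= 4 * PI / 3).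
  { replace (8 * (gamma - 1) / (PI * gamma) * (PI ^ 2 / 6))
      with (4 * PI / 3 * ((gamma - 1) / gamma)) by (field; lra).
    assert ((gamma - 1) / gamma <= 1) by (apply (Rdiv_le_1 (gamma - 1) gamma); lra). nra. }
  remember (8 * (gamma - 1) / (PI * gamma)) as c eqn:E; clear E.
  assert (HP : 0 <= 4 * PI / 3 - c * SR <= 4 * PI / 3) by nra.
  remember (4 * PI / 3 - c * SR) as P eqn:E; clear E.
  assert (Hq : 0 < 2 * sigma / Rs ^ 2) by (apply Rdiv_lt_0_compat; [|apply pow_lt]; lra).
  assert (HBr : - (2 * sigma / Rs ^ 2)
                <= rhol * Rs * (x ^ 2 - 0 ^ 2) + 4 * mul / Rs * x - 2 * sigma / Rs ^ 2).
  { assert (0 <= rhol * Rs * x ^ 2) by (apply Rmult_le_pos; nra).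
    assert (0 <= 4 * mul / Rs * x) by (apply Rmult_le_pos; [apply Rdiv_le_0_compat|]; lra).
    nra. }
  assert (Hg : 0 < 1 / (Rg * Tinf)) by (apply Rdiv_lt_0_compat; nra).
  assert (HK : 1 / (Rg * Tinf) * (4 * PI / 3 * (2 * sigma / Rs ^ 2)) < 4 * PI * rhos / Rs).
  { apply Rmult_lt_reg_r with (3 * Rg * Tinf * Rs / (4 * PI)).
    { apply Rdiv_lt_0_compat; [repeat apply Rmult_lt_0_compat|]; lra. }
    replace (1 / (Rg * Tinf) * (4 * PI / 3 * (2 * sigma / Rs ^ 2))
             * (3 * Rg * Tinf * Rs / (4 * PI)))
      with (2 * sigma / Rs) by (field; repeat split; lra).
    replace (4 * PI * rhos / Rs * (3 * Rg * Tinf * Rs / (4 * PI))) with (3 * (Rg * Tinf * rhos))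
      by (field; lra).
    exact Hsurf. }
  remember (rhol * Rs * (x ^ 2 - 0 ^ 2) + 4 * mul / Rs * x - 2 * sigma / Rs ^ 2) as Br eqn:E.
  clear E.
  assert (P * Br >= - (4 * PI / 3 * (2 * sigma / Rs ^ 2))) by nra.
  assert (1 / (Rg * Tinf) * (P * Br) >= - (1 / (Rg * Tinf) * (4 * PI / 3 * (2 * sigma / Rs ^ 2))))
    by nra.
  lra.
Qed.

Lemma Qfun_nonreal_root_cone :
  exists eps, 0 < eps /\
    forall x y, y <> 0 -> Q (x, y) = RtoC 0 -> x < 0 /\ eps * y ^ 2 <= x ^ 2.
Proof.
  pose proof PI_RGT_0.
  assert (Ha : 0 < PI ^ 2 * kb) by (apply Rmult_lt_0_compat; [apply pow_lt|]; lra).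
  assert (Hc : 0 < 8 * (gamma - 1) / (PI * gamma)) by (apply Rdiv_lt_0_compat; nra).
  assert (Hg : 0 < 1 / (Rg * Tinf)) by (apply Rdiv_lt_0_compat; nra).
  assert (HK : 0 < 4 * PI * rhos / Rs / (1 / (Rg * Tinf)))
    by (apply Rdiv_lt_0_compat; [apply Rdiv_lt_0_compat|]; nra).
  destruct (cone_of_balance (PI ^ 2 * kb) (8 * (gamma - 1) / (PI * gamma) * (PI ^ 2 * kb))
              (4 * PI * rhos / Rs / (1 / (Rg * Tinf))) (rhol * Rs) (4 * mul / Rs)
              (2 * sigma / Rs ^ 2))
    as [eps [Heps Hcone]]; try nra.
  { apply Rdiv_le_0_compat; lra. }
  { apply Rdiv_lt_0_compat; [|apply pow_lt]; lra. }
  exists eps; split; [exact Heps|]. intros x y Hy HQ.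
  assert (Hy2 : 0 < y ^ 2) by (apply pow2_gt_0; exact Hy).
  destruct (Qfun_re_im kb gamma Rg Tinf sigma mul rhol rhos Rs x y) as [HRe HIm].
  rewrite HQ in HRe, HIm. cbn [Re Im RtoC fst snd] in HRe, HIm.
  set (W := Series (fun n => 1 / ((PI ^ 2 * kb * INR (S n) ^ 2 + x) ^ 2 + y ^ 2))).
  assert (HSI : Series (fun n => Im (Qterm kb (x, y) (S n))) = PI ^ 2 * kb * y * W).
  { unfold W. rewrite <- Series_scal_l. apply Series_ext; intros n.
    assert (0 < (PI ^ 2 * kb * INR (S n) ^ 2 + x) ^ 2 + y ^ 2)
      by (pose proof (pow2_ge_0 (PI ^ 2 * kb * INR (S n) ^ 2 + x)); lra).
    destruct (Qterm_re_im kb x y n ltac:(assumption)) as [_ ->]. field; lra. }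
  rewrite HSI in HRe, HIm.
  apply (Hcone x y W Hy (Series_inv_sqdist_ge_first _ x y Ha Hy)).
  remember (Series (fun n => Re (Qterm kb (x, y) (S n)))) as SR eqn:E; clear E.
  remember (8 * (gamma - 1) / (PI * gamma)) as c eqn:E; clear E.
  remember (1 / (Rg * Tinf)) as g eqn:E; clear E.
  remember (4 * PI * rhos / Rs) as K1 eqn:E; clear E.
  remember (rhol * Rs * (x ^ 2 - y ^ 2) + 4 * mul / Rs * x - 2 * sigma / Rs ^ 2) as Br eqn:E.
  clear E.
  remember (2 * (rhol * Rs) * x + 4 * mul / Rs) as L eqn:E; clear E.
  pose proof (Cmult_eq_real_im (4 * PI / 3 - c * SR) (- (c * (PI ^ 2 * kb * y * W)))
                Br (y * L) (K1 / g)) as Hbal.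
  apply (Rmult_eq_reg_l y); [|exact Hy].
  transitivity (K1 / g * (y * L)); [ring|].
  rewrite <- Hbal; [ring| |].
  - apply (Rmult_eq_reg_l g); [|lra]. replace (g * - (K1 / g)) with (- K1) by (field; lra). lra.
  - apply (Rmult_eq_reg_l g); [|lra]. lra.
Qed.

Lemma Qfun_roots_in_sector :
  exists phi, PI / 2 < phi < PI /\
    forall tau, is_root_Q kb gamma Rg Tinf sigma mul rhol rhos Rs tau ->
      phi <= Rabs (Carg tau) <= PI.
Proof.
  destruct Qfun_nonreal_root_cone as [eps [Heps Hcone]].
  destruct (sector_of_cone eps Heps) as [phi [Hphi Hsector]].
  exists phi; split; [exact Hphi|].
  intros [x y] [_ HQ].
  enough (Hcone_xy : x < 0 /\ eps * y ^ 2 <= x ^ 2) by (apply Hsector; apply Hcone_xy).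
  destruct (Req_dec y 0) as [Hy|Hy].
  - subst y. destruct (Rlt_or_le x 0) as [Hx|Hx]; [split; nra|].
    exfalso. pose proof (Qfun_real_pos x Hx) as Hpos.
    rewrite HQ in Hpos. simpl in Hpos. lra.
  - apply Hcone; assumption.
Qed.

End QfunRoots.

Theorem lemmaB2
  (kappa gamma cv Rg cp Tinf pinf sigma mul rhol rhos Rs : R)
  (Hkappa : 0 < kappa) (Hgamma : 1 < gamma) (Hcv : 0 < cv) (HRg : 0 < Rg)
  (Hcp1 : cp = gamma * cv) (Hcp2 : cp = cv + Rg)
  (HT : 0 < Tinf) (Hp : 0 < pinf) (Hsigma : 0 < sigma) (Hmul : 0 <= mul)
  (Hrhol : 0 < rhol) (Hrhos : 0 < rhos) (HRs : 0 < Rs)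
  (Heq : Rg * Tinf * rhos = pinf + 2 * sigma / Rs) :
  exists phi : R, PI / 2 < phi < PI /\
    forall tau : C,
      is_root_Q (kbar kappa cp rhos Rs) gamma Rg Tinf sigma mul rhol rhos Rs tau ->
      phi <= Rabs (Carg tau) <= PI.
Proof.
  assert (Hkb : 0 < kbar kappa cp rhos Rs).
  { unfold kbar. apply Rdiv_lt_0_compat; [lra|].
    apply Rmult_lt_0_compat; [apply Rmult_lt_0_compat; lra | apply pow_lt; lra]. }
  assert (Hsurf : 2 * sigma / Rs < 3 * (Rg * Tinf * rhos)).
  { assert (0 < 2 * sigma / Rs) by (apply Rdiv_lt_0_compat; lra). lra. }
  apply Qfun_roots_in_sector; assumption.
Qed.
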